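(* For every sequence $(\xi_i)_{i\in\mathbb N}$ of terms in $\Lambda$, there exists $\phi\in\Lambda$ such that: (1) $\phi\underline i\succ\xi_i$ for every $i\in\mathbb N$; (2) for every $U\in\Lambda$ such that $U\phi\Vdash\bot$, there exists $k\in\mathbb N$ such that $U\psi\Vdash\bot$ for every $\psi\in\Lambda$ satisfying $\psi\underline i\succ\xi_i$ for every $i<k$.
   Context: Fix an integer $N\ge 0$. The set $\Lambda$ of terms is the smallest set containing the constants $B,C,I,K,W,cc,A$ and $p,q_0,\dots,q_N$, closed under application $(\xi)\eta$ (written $\xi\eta$), and containing, for each sequence $(\xi_i)_{i\in\mathbb N}$ of closed terms (no occurrence of $p,q_0,\dots,q_N$), a constant $\bigwedge_i\xi_i$ (injectively, well-founded). Stacks: finite sequences $t_0\cdot\ldots\cdot t_{n-1}\cdot\pi_0$ of terms, $\pi_0$ the empty stack; $\Pi$ the set of stacks. $\ell_t=((C)(B)CB)t$, $k_{\pi_0}=A$, $k_{t\cdot\pi}=(\ell_t)k_\pi$; $\sigma=(BW)(C)(B)BB$, $\underline0=(K)I$, $\underline{n+1}=(\sigma)\underline n$. Execution $\succ$: least preorder on $\Lambda\times\Pi$ with $(\xi)\eta\star\pi\succ\xi\star\eta\cdot\pi$; $B\star\xi\cdot\eta\cdot\zeta\cdot\pi\succ\xi\star(\eta)\zeta\cdot\pi$; $C\star\xi\cdot\eta\cdot\zeta\cdot\pi\succ\xi\star\zeta\cdot\eta\cdot\pi$; $I\star\xi\cdot\pi\succ\xi\star\pi$; $K\star\xi\cdot\eta\cdot\pi\succ\xi\star\pi$;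 $W\star\xi\cdot\eta\cdot\pi\succ\xi\star\eta\cdot\eta\cdot\pi$; $cc\star\xi\cdot\pi\succ\xi\star k_\pi\cdot\pi$; $A\star\xi\cdot\pi\succ\xi\star\pi_0$; $\bigwedge_i\xi_i\star\underline n\cdot\pi\succ\xi_n\star\pi$. For terms, $\xi\succ\eta$ means $\xi\star\pi\succ\eta\star\pi$ for every $\pi\in\Pi$. Pole $\perp\!\!\!\perp=\{\xi\star\pi:\exists\varpi,\ \xi\star\pi\succ p\star\varpi\}$. $\xi\Vdash\bot$ means $\xi\star\pi\in\perp\!\!\!\perp$ for every $\pi\in\Pi$. *)

From Stdlib Require Import List.
Import ListNotations.

(* Raw terms.  [q j] is the constant q_j; membership j <= N is imposed by [inLambda N].
   [Inf f] is the constant /\_i f i (injective and well-founded by construction). *)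
Inductive term : Type :=
| cB | cC | cI | cK | cW | ccc | cA
| cp
| cq (j : nat)
| app (t u : term)
| Inf (f : nat -> term).

Inductive closed : term -> Prop :=
| cl_B : closed cB | cl_C : closed cC | cl_I : closed cI | cl_K : closed cK
| cl_W : closed cW | cl_cc : closed ccc | cl_A : closed cA
| cl_app t u : closed t -> closed u -> closed (app t u)
| cl_Inf f : (forall i, closed (f i)) -> closed (Inf f).

Inductive inLambda (N : nat) : term -> Prop :=
| L_B : inLambda N cB | L_C : inLambda N cC | L_I : inLambda N cI
| L_K : inLambda N cK | L_W : inLambda N cW | L_cc : inLambda N ccc
| L_A : inLambda N cA | L_p : inLambda N cp
| L_q j : j <= N -> inLambda N (cq j)
| L_app t u : inLambda N t -> inLambda N u -> inLambda N (app t u)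
| L_Inf f : (forall i, closed (f i) /\ inLambda N (f i)) -> inLambda N (Inf f).

(* stacks: finite sequences of terms, [] is pi_0 *)
Definition stack := list term.
Definition inPi (N : nat) (pi : stack) : Prop := Forall (inLambda N) pi.

Definition ell (t : term) : term := app (app cC (app (app cB cC) cB)) t.
Fixpoint kont (pi : stack) : term :=
  match pi with
  | [] => cA
  | t :: pi' => app (ell t) (kont pi')
  end.

Definition sigma : term := app (app cB cW) (app cC (app (app cB cB) cB)).
Fixpoint num (n : nat) : term :=
  match n with
  | 0 => app cK cI
  | S m => app sigma (num m)
  end.

Inductive step : term * stack -> term * stack -> Prop :=
| st_push t u pi : step (app t u, pi) (t, u :: pi)
| st_B x y z pi : step (cB, x :: y :: z :: pi) (x, app y z :: pi)
| st_C x y z pi : step (cC, x :: y :: z :: pi) (x, z :: y :: pi)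
| st_I x pi : step (cI, x :: pi) (x, pi)
| st_K x y pi : step (cK, x :: y :: pi) (x, pi)
| st_W x y pi : step (cW, x :: y :: pi) (x, y :: y :: pi)
| st_cc x pi : step (ccc, x :: pi) (x, kont pi :: pi)
| st_A x pi : step (cA, x :: pi) (x, [])
| st_Inf f n pi : step (Inf f, num n :: pi) (f n, pi).

Inductive exec : term * stack -> term * stack -> Prop :=
| ex_refl s : exec s s
| ex_step s1 s2 s3 : step s1 s2 -> exec s2 s3 -> exec s1 s3.

Definition texec (N : nat) (xi eta : term) : Prop :=
  forall pi, inPi N pi -> exec (xi, pi) (eta, pi).

Definition in_pole (N : nat) (xi : term) (pi : stack) : Prop :=
  exists varpi, inPi N varpi /\ exec (xi, pi) (cp, varpi).

Definition realizes_bot (N : nat) (xi : term) : Prop :=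
  forall pi, inPi N pi -> in_pole N xi pi.

(* The realizer is phi := C(...(C (/\_i lam alpha. xi_i) q_0)...) p, where alpha is the list
   of atoms q_0, ..., q_N, p: the components of /\ must be closed, so the atoms are
   abstracted (by combinatory bracket abstraction) and put back, and phi n . pi
   executes to /\ * n . alpha . pi, then to xi_n * pi.
   For the second property, take a run of U phi * pi_0 reaching p.  Replacing phi by psi,
   and A by the continuation k_pi, turns it into a run of U psi * pi, except at the moments
   where phi comes in head position.  Then phi must face a numeral n (nothing else leads
   to p) and the run continues as xi_n, which psi n reaches as well if n < k.  As phi
   contains p it never occurs inside a numeral, so numerals are copied unchanged.
   Execution is deterministic, so the run from xi_n is a strict suffix of the given one,
   and induction on the length of runs yields the finite bound k. *)

From Stdlib Require Import List Arith Lia Classical.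
Import ListNotations.

Lemma exec_trans a b c : exec a b -> exec b c -> exec a c.
Proof. induction 1; intros; auto. eapply ex_step; eauto. Qed.

Ltac run := repeat (eapply ex_step; [econstructor|]).

Inductive execn : nat -> term * stack -> term * stack -> Prop :=
| execn_refl c : execn 0 c c
| execn_step n c1 c2 c3 : step c1 c2 -> execn n c2 c3 -> execn (S n) c1 c3.

Lemma exec_execn c d : exec c d -> exists n, execn n c d.
Proof.
  induction 1 as [|c1 c2 c3 Hs _ [n Hn]]; [exists 0 | exists (S n)]; econstructor; eauto.
Qed.

Definition final (c : term * stack) : Prop := forall e, ~ step c e.

Lemma final_cp w : final (cp, w).
Proof. intros e H; inversion H. Qed.

Lemma execn_final n c d : execn n c d -> final c -> c = d.
Proof. intros [|n' c1 c2 c3 Hs _] Hc; [reflexivity | exfalso; eapply Hc; eauto]. Qed.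

Lemma num_inj n m : num n = num m -> n = m.
Proof. revert m; induction n; intros [|m] H; inversion H; auto. Qed.

Lemma step_deterministic c d e : step c d -> step c e -> d = e.
Proof.
  intros H1 H2; inversion H1; subst; inversion H2; subst; auto.
  match goal with h : num _ = num _ |- _ => apply num_inj in h; subst; auto end.
Qed.

Lemma execn_suffix j c c' :
  execn j c c' -> forall m d, execn m c d -> final d -> j <= m /\ execn (m - j) c' d.
Proof.
  induction 1 as [c|j c1 c2 c3 Hs _ IH]; intros m d Hm Hd.
  - rewrite Nat.sub_0_r; split; [lia | exact Hm].
  - inversion Hm as [|m' e1 e2 e3 Hs' Hrest]; subst.
    + exfalso; eapply Hd; eauto.
    + rewrite (step_deterministic _ _ _ Hs Hs') in IH.
      destruct (IH _ _ Hrest Hd); split; [lia | assumption].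
Qed.

Lemma exec_suffix c c' m d :
  exec c c' -> execn m c d -> final d -> exists m', m' <= m /\ execn m' c' d.
Proof.
  intros H Hm Hd; destruct (exec_execn _ _ H) as [j Hj].
  destruct (execn_suffix _ _ _ Hj _ _ Hm Hd); exists (m - j); split; [lia | assumption].
Qed.

Lemma exec_fold_app r y s : exec (fold_left app r y, s) (y, r ++ s).
Proof.
  revert y s; induction r; intros y s; simpl; [apply ex_refl|].
  eapply exec_trans; [apply IHr | run; apply ex_refl].
Qed.

Lemma exec_kont r y s : exec (kont r, y :: s) (fold_left app r y, []).
Proof.
  revert y s; induction r; intros y s; simpl; unfold ell; run; [apply ex_refl | apply IHr].
Qed.

Lemma kont_restore r y s : exec (kont r, y :: s) (y, r).
Proof.
  eapply exec_trans; [apply exec_kont|].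
  rewrite <- (app_nil_r r) at 2; apply exec_fold_app.
Qed.

Definition atom_eqb (x t : term) : bool :=
  match x, t with
  | cp, cp => true
  | cq i, cq j => Nat.eqb i j
  | _, _ => false
  end.

Lemma atom_eqb_eq x t : atom_eqb x t = true -> t = x.
Proof.
  destruct x, t; simpl; try discriminate; auto.
  intro H; apply Nat.eqb_eq in H; subst; auto.
Qed.

Fixpoint cps_abs (x t : term) : term :=
  match t with
  | app t1 t2 => app (app cB (cps_abs x t1)) (app (app cB (app cB (cps_abs x t2))) cB)
  | _ => if atom_eqb x t then cW else app (app cC cI) t
  end.

Definition lam (x t : term) : term := app (app cB ccc) (app cC (cps_abs x t)).

Lemma cps_abs_spec x t k s : exec (cps_abs x t, k :: x :: s) (k, t :: x :: s).
Proof.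
  revert k s; induction t; intros k s; simpl;
    try (destruct (atom_eqb x _) eqn:E;
         [apply atom_eqb_eq in E; subst | ]; run; apply ex_refl).
  run; eapply exec_trans; [apply IHt1|].
  run; eapply exec_trans; [apply IHt2|].
  run; apply ex_refl.
Qed.

(* [cc] captures the stack [r] below [x]; restoring it discards [x]. *)
Lemma lam_spec x t r : exec (lam x t, x :: r) (t, r).
Proof.
  unfold lam; run.
  eapply exec_trans; [apply cps_abs_spec | apply kont_restore].
Qed.

Inductive atoms_in (S : list term) : term -> Prop :=
| ai_B : atoms_in S cB | ai_C : atoms_in S cC | ai_I : atoms_in S cI
| ai_K : atoms_in S cK | ai_W : atoms_in S cW | ai_cc : atoms_in S ccc
| ai_A : atoms_in S cA
| ai_p : In cp S -> atoms_in S cp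
| ai_q j : In (cq j) S -> atoms_in S (cq j)
| ai_app t u : atoms_in S t -> atoms_in S u -> atoms_in S (app t u)
| ai_Inf f : (forall i, closed (f i)) -> atoms_in S (Inf f).

Lemma atoms_in_incl S S' t : incl S S' -> atoms_in S t -> atoms_in S' t.
Proof. intros Hi H; induction H; constructor; auto. Qed.

Lemma atoms_in_nil_closed t : atoms_in [] t -> closed t.
Proof. induction 1; try constructor; auto; contradiction. Qed.

Lemma atoms_in_cps_abs x S t : atoms_in (x :: S) t -> atoms_in S (cps_abs x t).
Proof.
  induction 1 as [| | | | | | |Hin|j Hin| |]; simpl;
    try (destruct (atom_eqb x _) eqn:E; repeat constructor; auto; fail).
  - destruct (atom_eqb x cp) eqn:E; repeat constructor.
    destruct Hin as [->|]; [discriminate | assumption].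
  - destruct (atom_eqb x (cq j)) eqn:E; repeat constructor.
    destruct Hin as [->|]; [simpl in E; rewrite Nat.eqb_refl in E; discriminate | assumption].
  - repeat constructor; auto.
Qed.

Lemma atoms_in_lam x S t : atoms_in (x :: S) t -> atoms_in S (lam x t).
Proof. intros; unfold lam; repeat constructor; apply atoms_in_cps_abs; auto. Qed.

Definition lams (L : list term) (t : term) : term := fold_right lam t L.

Lemma lams_spec L t r : exec (lams L t, L ++ r) (t, r).
Proof.
  induction L; simpl; [apply ex_refl|].
  eapply exec_trans; [apply lam_spec | exact IHL].
Qed.

Lemma atoms_in_lams L S t : atoms_in (L ++ S) t -> atoms_in S (lams L t).
Proof.
  revert S t; induction L; intros S t H; simpl in *; auto.
  apply atoms_in_lam, IHL; eapply atoms_in_incl; [|exact H].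
  intros z; simpl; rewrite !in_app_iff; simpl; tauto.
Qed.

Lemma closed_inLambda N t : closed t -> inLambda N t.
Proof. induction 1; constructor; auto. Qed.

Definition atoms (N : nat) : list term := map cq (seq 0 (S N)) ++ [cp].

Lemma inPi_atoms N : inPi N (atoms N).
Proof.
  apply Forall_app; split; [|repeat constructor].
  apply Forall_forall; intros z Hz; apply in_map_iff in Hz as [j [<- Hj]].
  apply in_seq in Hj; constructor; lia.
Qed.

Lemma inLambda_atoms_in N t : inLambda N t -> atoms_in (atoms N) t.
Proof.
  unfold atoms; induction 1; constructor; auto; try (intro i; apply H).
  - rewrite in_app_iff; simpl; auto.
  - rewrite in_app_iff; left; apply in_map, in_seq; lia.
Qed.

Definition reapply (X : term) (L : list term) : term :=
  fold_left (fun Y a => app (app cC Y) a) L X.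

Lemma reapply_spec L X y r : exec (reapply X L, y :: r) (X, y :: L ++ r).
Proof.
  revert X; induction L; intro X; simpl; [apply ex_refl|].
  eapply exec_trans; [apply IHL | run; apply ex_refl].
Qed.

Lemma inLambda_reapply N L X : inPi N L -> inLambda N X -> inLambda N (reapply X L).
Proof.
  intro HL; revert X; induction HL; intros X HX; simpl; auto.
  apply IHHL; repeat constructor; auto.
Qed.

Definition realizer (N : nat) (xi : nat -> term) : term :=
  reapply (Inf (fun i => lams (atoms N) (xi i))) (atoms N).

Lemma inLambda_realizer N xi :
  (forall i, inLambda N (xi i)) -> inLambda N (realizer N xi).
Proof.
  intro Hxi; apply inLambda_reapply; [apply inPi_atoms|].
  constructor; intro i.
  assert (Hc : closed (lams (atoms N) (xi i))).
  { apply atoms_in_nil_closed, atoms_in_lams.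
    rewrite app_nil_r; apply inLambda_atoms_in, Hxi. }
  split; [exact Hc | apply closed_inLambda, Hc].
Qed.

Lemma realizer_spec N xi i pi : exec (app (realizer N xi) (num i), pi) (xi i, pi).
Proof.
  eapply ex_step; [constructor|]; eapply exec_trans; [apply reapply_spec|].
  eapply ex_step; [constructor | apply lams_spec].
Qed.

Lemma realizer_shape N xi : exists Y, realizer N xi = app (app cC Y) cp.
Proof. unfold realizer, reapply, atoms; rewrite fold_left_app; eexists; reflexivity. Qed.

Lemma realizer_run_to_p N xi m s w :
  execn m (realizer N xi, s) (cp, w) ->
  exists n r m', s = num n :: r /\ execn m' (xi n, r) (cp, w) /\ m' < m.
Proof.
  intro H; destruct s as [|y s].
  - exfalso; destruct (realizer_shape N xi) as [Y HY]; rewrite HY in H.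
    assert (Hrun : exec (app (app cC Y) cp, []) (cC, [Y; cp])) by (run; apply ex_refl).
    destruct (exec_suffix _ _ _ _ Hrun H (final_cp w)) as [m' [_ Hm']].
    apply execn_final in Hm'; [discriminate|].
    intros e He; inversion He.
  - destruct (exec_suffix _ _ _ _ (reapply_spec _ _ y s) H (final_cp w)) as [m1 [Hm1 H1]].
    inversion H1 as [|m2 c1 c2 c3 Hst Hrest]; subst; inversion Hst; subst.
    destruct (exec_suffix _ _ _ _ (lams_spec (atoms N) (xi n) s) Hrest (final_cp w)) as [m3 [Hm3 H3]].
    exists n, s, m3; repeat split; auto; lia.
Qed.

Inductive pA_free : term -> Prop :=
| pf_B : pA_free cB | pf_C : pA_free cC | pf_I : pA_free cI | pf_K : pA_free cK
| pf_W : pA_free cW | pf_cc : pA_free ccc | pf_q j : pA_free (cq j)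
| pf_app t u : pA_free t -> pA_free u -> pA_free (app t u)
| pf_Inf f : pA_free (Inf f).

Lemma pA_free_num n : pA_free (num n).
Proof. induction n; simpl; repeat constructor; auto. Qed.

Definition conf_in (N : nat) (c : term * stack) : Prop := inLambda N (fst c) /\ inPi N (snd c).

Lemma inLambda_kont N r : inPi N r -> inLambda N (kont r).
Proof. induction 1; simpl; repeat constructor; auto. Qed.

Lemma step_conf_in N c d : step c d -> conf_in N c -> conf_in N d.
Proof.
  unfold conf_in, inPi; intros Hs [Ht Hpi]; inversion Hs; subst; simpl in *;
    repeat match goal with h : Forall _ (_ :: _) |- _ => inversion h; subst; clear h end;
    try (inversion Ht; subst); repeat constructor; auto.
  - apply inLambda_kont; auto.
  - match goal with h : forall i, _ /\ _ |- _ => apply h end.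
Qed.

Lemma exec_conf_in N c d : exec c d -> conf_in N c -> conf_in N d.
Proof. induction 1; eauto using step_conf_in. Qed.

Definition reaches_p (N : nat) (c : term * stack) : Prop :=
  exists w, inPi N w /\ exec c (cp, w).

Lemma reaches_p_exec N c d : exec c d -> reaches_p N d -> reaches_p N c.
Proof. intros H [w [Hw Hd]]; exists w; split; [exact Hw | eapply exec_trans; eauto]. Qed.

Lemma reaches_p_push N t u s : reaches_p N (app t u, s) -> reaches_p N (t, u :: s).
Proof.
  intros [w [Hw H]]; exists w; split; [exact Hw|].
  inversion H as [|c1 c2 c3 Hs Hrest]; subst; inversion Hs; subst; exact Hrest.
Qed.

Section Replacement.

Variables (N : nat) (phi psi : term).

(* Replacing [A] by [k_tau] accounts for running on the stack [tau] instead of [pi_0]. *)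
Inductive replaced : term -> term -> Prop :=
| rp_refl t : replaced t t
| rp_app t u t' u' : replaced t t' -> replaced u u' -> replaced (app t u) (app t' u')
| rp_phi : replaced phi psi
| rp_A tau : inPi N tau -> replaced cA (kont tau).

Definition replaced_conf (c c' : term * stack) : Prop :=
  exists s' tau, snd c' = s' ++ tau /\ inPi N tau /\
    replaced (fst c) (fst c') /\ Forall2 replaced (snd c) s'.

Hypothesis phi_not_pA_free : ~ pA_free phi.

Lemma replaced_pA_free t t' : replaced t t' -> pA_free t -> t' = t.
Proof.
  induction 1 as [| t u t' u' _ IHt _ IHu | |]; intro Hf; auto.
  - inversion Hf; subst; f_equal; auto.
  - contradiction.
  - inversion Hf.
Qed.

Lemma replaced_kont s s' tau :
  Forall2 replaced s s' -> inPi N tau -> replaced (kont s) (kont (s' ++ tau)).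
Proof.
  induction 1; intros; simpl; [constructor; auto|].
  unfold ell; repeat apply rp_app; auto; apply rp_refl.
Qed.

Lemma step_replaced_stack t s d s' tau :
  step (t, s) d -> Forall2 replaced s s' -> inPi N tau ->
  exists d', exec (t, s' ++ tau) d' /\ replaced_conf d d'.
Proof.
  intros Hs HF Ht; inversion Hs; subst;
    repeat match goal with h : Forall2 _ (_ :: _) _ |- _ => inversion h; subst; clear h end.
  - eexists; split; [run; apply ex_refl|]; exists (u :: s'), tau; repeat constructor; auto.
  - eexists; split; [run; apply ex_refl|].
    eexists (app _ _ :: _), tau; repeat constructor; auto.
  - eexists; split; [run; apply ex_refl|].
    eexists (_ :: _ :: _), tau; repeat constructor; auto.
  - eexists; split; [run; apply ex_refl|]; eexists _, tau; repeat constructor; auto.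
  - eexists; split; [run; apply ex_refl|]; eexists _, tau; repeat constructor; auto.
  - eexists; split; [run; apply ex_refl|].
    eexists (_ :: _ :: _), tau; repeat constructor; auto.
  - eexists; split; [run; apply ex_refl|].
    eexists (kont (l' ++ tau) :: l'), tau; repeat constructor; auto.
    apply replaced_kont; auto.
  - eexists; split; [run; apply ex_refl|]; exists [], []; repeat constructor; assumption.
  - match goal with h : replaced (num _) _ |- _ =>
      apply replaced_pA_free in h; [subst | apply pA_free_num] end.
    eexists; split; [eapply ex_step; [constructor | apply ex_refl]|].
    eexists _, tau; repeat split; auto; apply rp_refl.
Qed.

Lemma step_replaced c d c' :
  step c d -> replaced_conf c c' -> ~ (fst c = phi /\ fst c' = psi) ->
  exists d', exec c' d' /\ replaced_conf d d'.
Proof.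
  destruct c as [t s], c' as [t' s''].
  intros Hs [s' [tau [E [Ht [HR HF]]]]] Hhead; simpl in *; subst s''.
  inversion HR as [| t1 u1 t1' u1' Ht1 Hu1 | | tau0 Htau0]; subst.
  - eapply step_replaced_stack; eauto.
  - inversion Hs; subst.
    eexists; split; [run; apply ex_refl|]; exists (u1' :: s'), tau; repeat constructor; auto.
  - exfalso; tauto.
  - inversion Hs; subst; inversion HF as [|y y' l l' Hy _]; subst.
    eexists; split; [apply kont_restore|]; exists [], tau0; repeat constructor; auto.
Qed.

Lemma reaches_p_step c d c' :
  step c d -> replaced_conf c c' -> conf_in N c' -> ~ (fst c = phi /\ fst c' = psi) ->
  (forall d', replaced_conf d d' -> conf_in N d' -> reaches_p N d') -> reaches_p N c'.
Proof.
  intros Hs Hc Hin Hhead Hd.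
  destruct (step_replaced _ _ _ Hs Hc Hhead) as [d' [He Hd']].
  apply (reaches_p_exec _ _ _ He), Hd; [exact Hd' | eapply exec_conf_in; eauto].
Qed.

End Replacement.

Definition agrees_below (N : nat) (psi : term) (xi : nat -> term) (k : nat) : Prop :=
  forall i, i < k -> texec N (app psi (num i)) (xi i).

Section Robustness.

Variables (N : nat) (xi : nat -> term).
Hypothesis xi_in : forall i, inLambda N (xi i).

Let phi := realizer N xi.

Lemma realizer_not_pA_free : ~ pA_free phi.
Proof.
  unfold phi; destruct (realizer_shape N xi) as [Y ->].
  intro H; inversion H as [| | | | | | | t u _ Hp |]; inversion Hp.
Qed.

Definition robust (k : nat) (c : term * stack) : Prop :=
  forall psi, inLambda N psi -> agrees_below N psi xi k ->
  forall c', replaced_conf N phi psi c c' -> conf_in N c' -> reaches_p N c'.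

Lemma robust_mono k k' c : k <= k' -> robust k c -> robust k' c.
Proof.
  intros Hk Hc psi Hpsi Hag; apply (Hc psi Hpsi).
  intros i Hi; apply Hag; lia.
Qed.

Lemma robust_cp w : robust 0 (cp, w).
Proof.
  intros psi _ _ [t' s''] [s' [tau [_ [_ [HR _]]]]] [_ Hw]; simpl in *.
  assert (t' = cp) as ->.
  { inversion HR; subst; auto.
    destruct (realizer_shape N xi) as [Y HY]; unfold phi in *; congruence. }
  exists s''; split; [exact Hw | apply ex_refl].
Qed.

Lemma reaches_p_handover psi n r c' :
  texec N (app psi (num n)) (xi n) ->
  replaced_conf N phi psi (phi, num n :: r) c' -> fst c' = psi -> conf_in N c' ->
  (forall d', replaced_conf N phi psi (xi n, r) d' -> conf_in N d' -> reaches_p N d') ->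
  reaches_p N c'.
Proof.
  destruct c' as [t' s'']; intros Hpsi [s' [tau [E [Ht [_ HF]]]]] Ehead [_ Hs] Hd.
  simpl in *; subst t' s''.
  inversion HF as [|y y' l l' Hy HF']; subst.
  apply replaced_pA_free in Hy; [subst | apply realizer_not_pA_free | apply pA_free_num].
  inversion Hs as [|? ? _ Hrest]; subst.
  apply reaches_p_push, (reaches_p_exec _ _ _ (Hpsi _ Hrest)), Hd.
  - exists l', tau; repeat split; auto; apply rp_refl.
  - split; [apply xi_in | exact Hrest].
Qed.

Lemma run_robust m c w : execn m c (cp, w) -> exists k, robust k c.
Proof.
  revert c; induction m as [m IH] using lt_wf_ind; intros c Hm.
  inversion Hm as [|m' c1 d c3 Hs Hrest]; subst; [exists 0; apply robust_cp|].
  destruct (IH m' (Nat.lt_succ_diag_r m') _ Hrest) as [k1 Hk1].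
  destruct c as [t s]; destruct (classic (t = phi)) as [Ephi | Ephi].
  - subst t; destruct (realizer_run_to_p N xi _ _ _ Hm) as [n [r [m2 [-> [Hxi Hlt]]]]].
    destruct (IH m2 Hlt _ Hxi) as [k2 Hk2].
    set (k := max k1 (max k2 (S n))); exists k; intros psi Hpsi Hag c' Hc' Hin.
    destruct (classic (fst c' = psi)) as [Epsi | Epsi].
    + apply (reaches_p_handover psi n r); auto; [apply Hag; unfold k; lia|].
      exact (robust_mono k2 k _ ltac:(unfold k; lia) Hk2 psi Hpsi Hag).
    + apply (reaches_p_step N phi psi realizer_not_pA_free _ _ _ Hs Hc' Hin); [simpl; tauto|].
      exact (robust_mono k1 k _ ltac:(unfold k; lia) Hk1 psi Hpsi Hag).
  - exists k1; intros psi Hpsi Hag c' Hc' Hin.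
    apply (reaches_p_step N phi psi realizer_not_pA_free _ _ _ Hs Hc' Hin); [simpl; tauto|].
    apply Hk1; assumption.
Qed.

End Robustness.

Theorem theorem2 (N : nat) (xi : nat -> term) :
  (forall i, inLambda N (xi i)) ->
  exists phi : term,
    inLambda N phi /\
    (forall i, texec N (app phi (num i)) (xi i)) /\
    (forall U : term, inLambda N U ->
       realizes_bot N (app U phi) ->
       exists k : nat,
         forall psi : term, inLambda N psi ->
           (forall i, i < k -> texec N (app psi (num i)) (xi i)) ->
           realizes_bot N (app U psi)).
Proof.
  intro Hxi; exists (realizer N xi); split; [|split].
  - apply inLambda_realizer, Hxi.
  - intros i pi _; apply realizer_spec.
  - intros U HU HUphi.
    destruct (HUphi [] (Forall_nil _)) as [w [_ Hrun]].
    destruct (exec_execn _ _ Hrun) as [m Hm].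
    destruct (run_robust N xi Hxi m _ w Hm) as [k Hk].
    exists k; intros psi Hpsi Hagree pi Hpi.
    apply (Hk psi Hpsi Hagree (app U psi, pi)).
    + exists [], pi; repeat split; auto; apply rp_app; [apply rp_refl | apply rp_phi].
    + split; [constructor; assumption | exact Hpi].
Qed.
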